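(* Let $n\geq 3$, $p,q>0$ with $pq>1$, $\alpha\in(0,n)$, $\sigma_1,\sigma_2\in[0,\alpha)$, with $q\geq p$ and $\sigma_1\geq\sigma_2$. Let $u,v$ be positive solutions of $$u(x)=\int_{\mathbb{R}^n}\frac{v(y)^q}{|x-y|^{n-\alpha}|y|^{\sigma_1}}\,dy,\qquad v(x)=\int_{\mathbb{R}^n}\frac{u(y)^p}{|x-y|^{n-\alpha}|y|^{\sigma_2}}\,dy,\qquad x\in\mathbb{R}^n,$$ satisfying $q_0+p_0\leq n-\alpha$. If $u,v$ are bounded and decay with the fast rates as $|x|\to\infty$, then $u,v$ are integrable solutions.
   Context: Define $$p_0=\frac{\alpha(1+p)-(\sigma_2+\sigma_1p)}{pq-1},\qquad q_0=\frac{\alpha(1+q)-(\sigma_1+\sigma_2q)}{pq-1},\qquad r_0=\frac{n}{q_0},\qquad s_0=\frac{n}{p_0}.$$ A positive solution $u,v$ is integrable if $u\in L^{r_0}(\mathbb{R}^n)$ and $v\in L^{s_0}(\mathbb{R}^n)$. The notation $f(x)\simeq g(x)$ means there exist constants $c,C>0$ with $cg(x)\leq f(x)\leq Cg(x)$ as $|x|\to\infty$. With $q\geq p$ and $\sigma_1\geq\sigma_2$, $u,v$ decay with the fast rates if $u(x)\simeq|x|^{-(n-\alpha)}$ and $v(x)\simeq|x|^{-(n-\alpha)}$ if $p(n-\alpha)+\sigma_2>n$; $v(x)\simeq|x|^{-(n-\alpha)}\ln|x|$ if $p(n-\alpha)+\sigma_2=n$; $v(x)\simeq|x|^{-(p(n-\alpha)-(\alpha-\sigma_2))}$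 if $p(n-\alpha)+\sigma_2<n$. *)

From HB Require Import structures.
From mathcomp Require Import all_boot all_order all_algebra.
From mathcomp Require Import all_classical all_reals all_analysis.
Set Implicit Arguments. Unset Strict Implicit. Unset Printing Implicit Defensive.
Import Order.TTheory GRing.Theory Num.Theory.
Local Open Scope classical_set_scope.
Local Open Scope ring_scope.

Section defs.
Variable R : realType.

(* Points of R^n are n-tuples of reals (measurable structure: the product
   sigma-algebra generated by the coordinates = Borel sets of R^n). *)

(* Lebesgue integral over R^n of a nonnegative extended-real function,
   computed as the iterated Lebesgue integral (Tonelli). *)
Fixpoint iint (n : nat) : (n.-tuple R -> \bar R) -> \bar R :=
  match n return (n.-tuple R -> \bar R) -> \bar R with
  | 0 => fun f => f [tuple]
  | n'.+1 => fun f =>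
      (\int[@lebesgue_measure R]_x iint (fun t => f (cons_tuple x t)))%E
  end.

Definition edist (n : nat) (x y : n.-tuple R) : R :=
  Num.sqrt (\sum_(i < n) (tnth x i - tnth y i) ^+ 2).
Definition enorm (n : nat) (x : n.-tuple R) : R :=
  Num.sqrt (\sum_(i < n) (tnth x i) ^+ 2).

(* f in L^r(R^n), for a positive function f *)
Definition in_Lr (n : nat) (r : R) (f : n.-tuple R -> R) : Prop :=
  measurable_fun setT f /\ (iint (fun x => ((f x) `^ r)%:E) < +oo)%E.

Definition HLS_op (n : nat) (alpha sigma e : R) (w : n.-tuple R -> R)
  (x : n.-tuple R) : \bar R :=
  iint (fun y => ((w y) `^ e /
         ((edist x y) `^ (n%:R - alpha) * (enorm y) `^ sigma))%:E).

Definition asymp_eq (n : nat) (f g : n.-tuple R -> R) : Prop :=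
  exists c C R0 : R, 0 < c /\ 0 < C /\
    forall x, R0 <= enorm x -> c * g x <= f x /\ f x <= C * g x.

Definition p0 (alpha p q sigma1 sigma2 : R) : R :=
  (alpha * (1 + p) - (sigma2 + sigma1 * p)) / (p * q - 1).
Definition q0 (alpha p q sigma1 sigma2 : R) : R :=
  (alpha * (1 + q) - (sigma1 + sigma2 * q)) / (p * q - 1).

(* fast decay rates (with q >= p, sigma1 >= sigma2) *)
Definition fast_decay (n : nat) (alpha p sigma2 : R)
  (u v : n.-tuple R -> R) : Prop :=
  asymp_eq u (fun x => (enorm x) `^ (- (n%:R - alpha))) /\
  (p * (n%:R - alpha) + sigma2 > n%:R ->
     asymp_eq v (fun x => (enorm x) `^ (- (n%:R - alpha)))) /\
  (p * (n%:R - alpha) + sigma2 = n%:R ->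
     asymp_eq v (fun x => (enorm x) `^ (- (n%:R - alpha)) * ln (enorm x))) /\
  (p * (n%:R - alpha) + sigma2 < n%:R ->
     asymp_eq v (fun x => (enorm x) `^ (- (p * (n%:R - alpha) - (alpha - sigma2))))).

End defs.

From HB Require Import structures.
From mathcomp Require Import all_boot all_order all_algebra.
From mathcomp Require Import all_classical all_reals all_analysis.
From mathcomp Require Import measurable_realfun ring lra.
Set Implicit Arguments.
Unset Strict Implicit.
Unset Printing Implicit Defensive.
Import Order.TTheory GRing.Theory Num.Theory.
Import numFieldNormedType.Exports.
Local Open Scope classical_set_scope.
Local Open Scope ring_scope.

(* If [0 <= f <= M]
   and [f x <= C |x|^-d] at infinity, then
   [f^r <= K (1 + |x|)^-(d r) <= K \prod_i (1 + |x_i|)^-(d r / n)], and the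
   iterated integral of the product factorises into one-dimensional integrals,
   finite when [d r > n]; for [r = n / a] this means [a < d].
   As [p0, q0 > 0] and [q0 + p0 <= n - alpha], both exponents lie below
   [n - alpha], and [p0 = p q0 - (alpha - sigma2)] lies below
   [p (n - alpha) - (alpha - sigma2)].  Hence [q0] and [p0] are below the decay
   rates of [u] and [v]; in the borderline logarithmic case, giving up an
   arbitrarily small part of the rate absorbs the logarithm. *)

Section iterated_integral.
Context {R : realType}.
Local Open Scope ereal_scope.

(* Unlike [ge0_le_integral], no measurability is required (the inner iterated
   integrals are not known to be measurable): both sides are suprema of
   integrals of simple functions. *)
Lemma ge0_le_integralT_nonmeasurable d (T : measurableType d)
    (mu : {measure set T -> \bar R}) (f g : T -> \bar R) :
  (forall x, 0 <= f x) -> (forall x, f x <= g x) ->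
  \int[mu]_x f x <= \int[mu]_x g x.
Proof.
move=> f0 fg.
have g0 x : 0 <= g x by exact: le_trans (f0 x) (fg x).
rewrite !ge0_integralTE//.
apply: ge_ereal_sup => _ /= [h hf <-].
apply: ereal_sup_ubound => /=.
by exists h => // x; exact: le_trans (hf x) (fg x).
Qed.

Lemma iint_ge0 n (f : n.-tuple R -> \bar R) :
  (forall x, 0 <= f x) -> 0 <= iint f.
Proof.
elim: n f => [|n IH] f f0 /=; first exact: f0.
by apply: integral_ge0 => x _; apply: IH.
Qed.

Lemma le_iint n (f g : n.-tuple R -> \bar R) :
  (forall x, 0 <= f x) -> (forall x, f x <= g x) -> iint f <= iint g.
Proof.
elim: n f g => [|n IH] f g f0 fg /=; first exact: fg.
apply: ge0_le_integralT_nonmeasurable => x; first exact: iint_ge0.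
exact: IH.
Qed.

Lemma iint_prod n (w : R -> R) (I k : R) :
  (forall t, (0 <= w t)%R) -> measurable_fun setT w ->
  \int[lebesgue_measure]_x (w x)%:E = I%:E -> (0 <= k)%R ->
  iint (fun t : n.-tuple R => (k * \prod_(i < n) w (tnth t i))%:E) =
  (k * I ^+ n)%:E.
Proof.
move=> w0 mw wI; elim: n k => [|n IH] k k0 /=; first by rewrite big_ord0 expr0.
have I0 : (0 <= I)%R.
  by rewrite -lee_fin -wI integral_ge0// => x _; rewrite lee_fin.
transitivity (\int[lebesgue_measure]_x ((k * I ^+ n)%:E * (w x)%:E)).
  apply: eq_integral => x _; rewrite -EFinM mulrAC -IH ?mulr_ge0//.
  congr iint; apply: funext => t.
  rewrite big_ord_recl /= tnth0 mulrA; congr (_ * _)%:E.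
  by apply: eq_bigr => i _; rewrite tnthS.
rewrite ge0_integralZl_EFin ?mulr_ge0 ?exprn_ge0//.
- by rewrite wI -EFinM exprSr mulrA.
- by move=> x _; rewrite lee_fin.
- exact/measurable_EFinP.
Qed.

End iterated_integral.

Section one_dimensional_tail.
Context {R : realType}.

Lemma continuous_powR_1Dnorm (g : R) :
  continuous (fun x : R => (1 + `|x|) `^ (- g)).
Proof.
move=> x.
apply: (@continuous_comp _ _ _ (fun x : R => 1 + `|x|) (fun a => a `^ (- g))).
  by apply: continuousD; [exact: cst_continuous | exact: norm_continuous].
apply/differentiable_continuous/derivable1_diffP.
by apply: derivable_powR; rewrite in_itv/= andbT ltr_wpDr.
Qed.

Lemma is_derive_powR_1D (g x : R) : g != 1 -> -1 < x ->
  is_derive x 1 (fun x => (1 - g)^-1 * (1 + x) `^ (1 - g)) ((1 + x) `^ (- g)).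
Proof.
move=> g1 x1.
have g1' : 1 - g != 0 by rewrite subr_eq0 eq_sym.
have x0 : 0 < 1 + x by rewrite -ltrBlDl sub0r.
have d1x : is_derive x 1 (fun x : R => 1 + x) 1.
  by rewrite -[X in is_derive _ _ _ X]add0r; apply: is_deriveD.
rewrite (_ : (1 + x) `^ (- g) =
    (1 - g)^-1 *: ((1 - g) * (1 + x) `^ (1 - g - 1) * 1)).
  exact: is_deriveZ (is_derive1_comp (is_derive1_powR _ x0) d1x).
by rewrite mulr1 /GRing.scale /= mulrA mulVf// mul1r addrAC subrr add0r.
Qed.

Lemma powR_1D_cvgy0 (b : R) : 0 < b -> (1 + x) `^ (- b) @[x --> +oo] --> 0.
Proof.
move=> b0; apply/cvgrPdist_lt => e e0; near=> x.
have hx : e `^ (- b^-1) < 1 + x.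
  by rewrite -ltrBlDl; near: x; apply: nbhs_pinfty_gt; rewrite num_real.
have x0 : 0 < 1 + x by apply: lt_trans hx; rewrite powR_gt0.
rewrite sub0r normrN ger0_norm ?powR_ge0// powRN.
have -> : e = ((e `^ (- b^-1)) `^ b)^-1.
  by rewrite -powRrM mulNr mulVf ?gt_eqF// powRN powRr1 ?invrK// ltW.
rewrite ltf_pV2 ?posrE ?powR_gt0//.
by apply: gt0_ltr_powR => //; rewrite nnegrE ltW// powR_gt0.
Unshelve. all: by end_near. Qed.

Lemma integral_powR_1Dnorm (g : R) : 1 < g ->
  exists I : R, (\int[lebesgue_measure]_x ((1 + `|x|) `^ (- g))%:E = I%:E)%E.
Proof.
move=> g1; have g1' : g != 1 by rewrite gt_eqF.
have Fd (x : R) : 0 <= x -> is_derive x 1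
    (fun x => (1 - g)^-1 * (1 + x) `^ (1 - g)) ((1 + x) `^ (- g)).
  by move=> x0; apply: is_derive_powR_1D => //; rewrite (lt_le_trans _ x0).
rewrite ge0_symfun_integralT; last 3 first.
- by move=> x; apply: powR_ge0.
- exact: continuous_powR_1Dnorm.
- by move=> x; rewrite /= normrN.
rewrite -set_itvcy (@ge0_continuous_FTC2y _ _
   (fun x => (1 - g)^-1 * (1 + x) `^ (1 - g)) 0 0).
- by eexists; rewrite -EFinB -EFinM.
- by move=> x _; apply: powR_ge0.
- exact/continuous_subspaceT/continuous_powR_1Dnorm.
- rewrite -(mulr0 ((1 - g)^-1)); apply: cvgMl_tmp.
  by rewrite -opprB; apply: powR_1D_cvgy0; rewrite subr_gt0.
- by move=> x /ltW /Fd [].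
- apply: cvg_at_right_filter.
  by have [/derivable1_diffP/differentiable_continuous] := Fd 0 (lexx _).
- move=> x; rewrite in_itv/= andbT => x0.
  by rewrite derive1E; have [_ ->] := Fd x (ltW x0); rewrite gtr0_norm.
Qed.

End one_dimensional_tail.

Section decay.
Context {R : realType}.

Definition decay_bound n (f : n.-tuple R -> R) (d : R) : Prop :=
  exists C R0 : R, forall x, R0 <= enorm x -> f x <= C * enorm x `^ (- d).

Lemma powRN_antitone (a b e : R) :
  0 < a -> a <= b -> 0 <= e -> b `^ (- e) <= a `^ (- e).
Proof.
move=> a0 ab e0; have b0 := lt_le_trans a0 ab.
rewrite !powRN lef_pV2 ?posrE ?powR_gt0//.
by apply: ge0_ler_powR => //; rewrite nnegrE ltW.
Qed.

Lemma enorm_ge0 n (x : n.-tuple R) : 0 <= enorm x.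
Proof. exact: sqrtr_ge0. Qed.

Lemma norm_tnth_le_enorm n (x : n.-tuple R) (i : 'I_n) : `|tnth x i| <= enorm x.
Proof.
rewrite /enorm -sqrtr_sqr ler_wsqrtr// (bigD1 i)//= lerDl.
by rewrite sumr_ge0// => j _; rewrite sqr_ge0.
Qed.

Lemma prod_powR n (a : 'I_n -> R) (e : R) : (forall i, 0 <= a i) ->
  \prod_(i < n) a i `^ e = (\prod_(i < n) a i) `^ e.
Proof.
move=> a0; pose K (y1 y2 : R) := y1 = y2 `^ e /\ 0 <= y2.
suff [] : K (\prod_(i < n) a i `^ e) (\prod_(i < n) a i) by [].
apply: (big_rec2 K) => [|i y1 y2 _ [-> y2_ge0]]; first by split; rewrite ?powR1.
by split; [rewrite powRM | rewrite mulr_ge0].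
Qed.

Lemma powR_1Denorm_le_prod n (x : n.-tuple R) (g : R) : 0 <= g ->
  (1 + enorm x) `^ (- (n%:R * g)) <= \prod_(i < n) (1 + `|tnth x i|) `^ (- g).
Proof.
move=> g0; rewrite prod_powR => [|i]; last by rewrite addr_ge0.
rewrite -mulrN powRrM powR_mulrn ?addr_ge0 ?enorm_ge0//.
apply: powRN_antitone g0; first by rewrite prodr_gt0// => i _; rewrite ltr_wpDr.
rewrite -[n in _ ^+ n]card_ord -prodr_const; apply: ler_prod => i _.
by rewrite addr_ge0//= lerD2l norm_tnth_le_enorm.
Qed.

Lemma decay_bound_1Denorm n (f : n.-tuple R -> R) (M d : R) :
  (forall x, f x <= M) -> 0 <= d -> decay_bound f d ->
  exists K, forall x, f x <= K * (1 + enorm x) `^ (- d).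
Proof.
move=> fM d0 [C [R0 fC]]; pose R1 := Num.max R0 1.
have R1_ge1 : 1 <= R1 by rewrite le_max lexx orbT.
pose K1 := Num.max M 0 * ((1 + R1) `^ (- d))^-1.
pose K2 := Num.max C 0 * (2^-1) `^ (- d).
have K10 : 0 <= K1 by rewrite mulr_ge0 ?le_max ?lexx ?orbT// invr_ge0 powR_ge0.
have K20 : 0 <= K2 by rewrite mulr_ge0 ?powR_ge0 ?le_max ?lexx ?orbT.
exists (K1 + K2) => x; have e0 := enorm_ge0 x.
have P0 : 0 <= (1 + enorm x) `^ (- d) by rewrite powR_ge0.
have [xl|xs] := leP R1 (enorm x).
- apply: le_trans (_ : K2 * (1 + enorm x) `^ (- d) <= _); last first.
    by rewrite ler_wpM2r// lerDr.
  have x1 : 1 <= enorm x by apply: le_trans xl.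
  apply: le_trans (fC x _) _; first by apply: le_trans xl; rewrite le_max lexx.
  apply: le_trans (_ : Num.max C 0 * enorm x `^ (- d) <= _).
    by rewrite ler_wpM2r ?powR_ge0// le_max lexx.
  rewrite /K2 -mulrA ler_wpM2l ?le_max ?lexx ?orbT//.
  by rewrite -powRM ?invr_ge0 ?addr_ge0//; apply: powRN_antitone => //; lra.
- apply: le_trans (_ : K1 * (1 + enorm x) `^ (- d) <= _); last first.
    by rewrite ler_wpM2r// lerDl.
  have R10 : 0 < 1 + R1 by lra.
  apply: le_trans (fM x) _; rewrite /K1 -mulrA.
  apply: le_trans (_ : Num.max M 0 * 1 <= _).
    by rewrite mulr1 le_max lexx.
  rewrite ler_wpM2l ?le_max ?lexx ?orbT// mulrC ler_pdivlMr ?powR_gt0// mul1r.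
  by apply: powRN_antitone => //; lra.
Qed.

Lemma powRN_mul_ln_le (y d e : R) : 1 <= y -> 0 < e ->
  y `^ (- d) * ln y <= e^-1 * y `^ (- (d - e)).
Proof.
move=> y1 e0; have y0 : 0 < y by apply: lt_le_trans y1.
have ln_le : e * ln y <= y `^ e.
  have : -1 < y `^ e - 1 by have := powR_gt0 e y0; lra.
  move/le_ln1Dx; rewrite addrC subrK ln_powR; lra.
rewrite opprB addrC powRD; last by rewrite (gt_eqF y0) implybT.
rewrite -(ler_pM2l e0) [X in _ <= X]mulrA mulfV ?gt_eqF// mul1r mulrCA.
by rewrite ler_wpM2l ?powR_ge0.
Qed.

Lemma decay_bound_ln n (f : n.-tuple R -> R) (d e : R) : 0 < e ->
  asymp_eq f (fun x => enorm x `^ (- d) * ln (enorm x)) -> decay_bound f (d - e).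
Proof.
move=> e0 [c [C [R0 [_ [C0 fC]]]]].
exists (C / e), (Num.max R0 1) => x hx.
have x1 : 1 <= enorm x by apply: le_trans hx; rewrite le_max lexx orbT.
have x0 : 0 < enorm x by apply: lt_le_trans x1.
have R0x : R0 <= enorm x by apply: le_trans hx; rewrite le_max lexx.
have [_ /le_trans] := fC x R0x; apply.
rewrite -mulrA ler_wpM2l ?(ltW C0)//; exact: powRN_mul_ln_le.
Qed.

Lemma decay_bound_asymp_eq n (f : n.-tuple R -> R) (d : R) :
  asymp_eq f (fun x => enorm x `^ (- d)) -> decay_bound f d.
Proof. by move=> [c [C [R0 [_ [_ fC]]]]]; exists C, R0 => x /fC []. Qed.

Lemma in_Lr_decay n (f : n.-tuple R -> R) (M a d : R) :
  measurable_fun setT f -> (forall x, 0 <= f x) -> (forall x, f x <= M) ->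
  0 < a -> a < d -> decay_bound f d -> in_Lr (n%:R / a) f.
Proof.
move=> mf f0 fM a0 ad fd; split => //.
case: n f mf f0 fM fd => [|n] f _ f0 fM fd; first exact: ltry.
have d0 : 0 < d by apply: lt_trans ad.
have [K fK] := decay_bound_1Denorm fM (ltW d0) fd.
set r := _ / a; pose g := d / a.
have r0 : 0 < r by rewrite divr_gt0.
have g1 : 1 < g by rewrite ltr_pdivlMr// mul1r.
have dr : d * r = n.+1%:R * g by rewrite mulrCA.
have [I hI] := integral_powR_1Dnorm g1.
pose Kr := Num.max K 0 `^ r.
apply: (@le_lt_trans _ _ (iint (fun t : n.+1.-tuple R =>
   (Kr * \prod_(i < n.+1) (1 + `|tnth t i|) `^ (- g))%:E))); last first.
  rewrite (iint_prod _ _ _ hI) ?ltry ?powR_ge0//.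
  by apply: continuous_measurable_fun; exact: continuous_powR_1Dnorm.
apply: le_iint => x; rewrite lee_fin ?powR_ge0//.
have fK' : f x <= Num.max K 0 * (1 + enorm x) `^ (- d).
  by rewrite (le_trans (fK x))// ler_wpM2r ?powR_ge0 ?le_max ?lexx.
have f_ge0 : f x \in Num.nneg by rewrite nnegrE.
apply: le_trans (ge0_ler_powR (ltW r0) f_ge0 _ fK') _.
  by rewrite nnegrE mulr_ge0 ?powR_ge0 ?le_max ?lexx ?orbT.
rewrite powRM ?powR_ge0 ?le_max ?lexx ?orbT// -powRrM mulNr dr.
rewrite ler_wpM2l ?powR_ge0//.
exact/powR_1Denorm_le_prod/ltW/(lt_trans ltr01 g1).
Qed.

End decay.

Section exponents.
Context {R : realType}.
Variables (alpha p q sigma1 sigma2 : R).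

Lemma q0_gt0 : 0 < q -> 1 < p * q -> sigma1 < alpha -> sigma2 < alpha ->
  0 < q0 alpha p q sigma1 sigma2.
Proof.
move=> q_gt0 pq_gt1 s1a s2a; rewrite /q0 divr_gt0 ?subr_gt0//.
have : 0 < q * (alpha - sigma2) by rewrite mulr_gt0// subr_gt0.
lra.
Qed.

Lemma p0_gt0 : 0 < p -> 1 < p * q -> sigma1 < alpha -> sigma2 < alpha ->
  0 < p0 alpha p q sigma1 sigma2.
Proof.
move=> p_gt0 pq_gt1 s1a s2a; rewrite /p0 divr_gt0 ?subr_gt0//.
have : 0 < p * (alpha - sigma1) by rewrite mulr_gt0// subr_gt0.
lra.
Qed.

Lemma p0E : p * q != 1 ->
  p0 alpha p q sigma1 sigma2 = p * q0 alpha p q sigma1 sigma2 - (alpha - sigma2).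
Proof. by move=> pq_neq1; rewrite /p0 /q0; field; rewrite subr_eq0. Qed.

End exponents.

Lemma fast_decay_v_bound {R : realType} n (alpha p sigma2 a : R)
    (u v : n.-tuple R -> R) :
  fast_decay alpha p sigma2 u v -> a < n%:R - alpha ->
  a < p * (n%:R - alpha) - (alpha - sigma2) ->
  exists2 d, a < d & decay_bound v d.
Proof.
move=> [_ [vgt [veq vlt]]] an ap.
have [hgt|hlt|heq] := ltgtP n%:R (p * (n%:R - alpha) + sigma2).
- by exists (n%:R - alpha) => //; exact/decay_bound_asymp_eq/vgt.
- exists (p * (n%:R - alpha) - (alpha - sigma2)) => //.
  exact/decay_bound_asymp_eq/vlt.
- exists (n%:R - alpha - (n%:R - alpha - a) / 2); first lra.
  by apply: decay_bound_ln (veq (esym heq)); lra.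
Qed.

Theorem proposition4p5 (R : realType) (n : nat) (p q alpha sigma1 sigma2 : R)
  (u v : n.-tuple R -> R) :
  (3 <= n)%N ->
  0 < p -> 0 < q -> 1 < p * q ->
  0 < alpha -> alpha < n%:R ->
  0 <= sigma1 -> sigma1 < alpha -> 0 <= sigma2 -> sigma2 < alpha ->
  p <= q -> sigma2 <= sigma1 ->
  (* u, v are positive (measurable) solutions of the integral system *)
  measurable_fun setT u -> measurable_fun setT v ->
  (forall x, 0 < u x) -> (forall x, 0 < v x) ->
  (forall x, (u x)%:E = HLS_op alpha sigma1 q v x) ->
  (forall x, (v x)%:E = HLS_op alpha sigma2 p u x) ->
  q0 alpha p q sigma1 sigma2 + p0 alpha p q sigma1 sigma2 <= n%:R - alpha ->
  (* u, v bounded *)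
  (exists M : R, forall x, u x <= M) -> (exists M : R, forall x, v x <= M) ->
  fast_decay alpha p sigma2 u v ->
  in_Lr (n%:R / q0 alpha p q sigma1 sigma2) u /\
  in_Lr (n%:R / p0 alpha p q sigma1 sigma2) v.
Proof.
move=> _ p_gt0 q_gt0 pq_gt1 _ _ _ s1a _ s2a _ _ mu mv u_gt0 v_gt0 _ _ sum_le
  [Mu uM] [Mv vM] decay.
have Q0 := q0_gt0 q_gt0 pq_gt1 s1a s2a.
have P0 := p0_gt0 p_gt0 pq_gt1 s1a s2a.
split.
  apply: (in_Lr_decay mu (fun x => ltW (u_gt0 x)) uM Q0 (d := n%:R - alpha)).
    lra.
  exact/decay_bound_asymp_eq/decay.1.
have P_lt : p0 alpha p q sigma1 sigma2 < n%:R - alpha by lra.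
have P_lt' : p0 alpha p q sigma1 sigma2 < p * (n%:R - alpha) - (alpha - sigma2).
  by rewrite p0E ?gt_eqF// ltrD2r ltr_pM2l//; lra.
have [d Pd vd] := fast_decay_v_bound decay P_lt P_lt'.
exact: in_Lr_decay mv (fun x => ltW (v_gt0 x)) vM P0 Pd vd.
Qed.
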